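(* Let $\mathcal U\subset Q\times Q$ be a symmetric $D$-type subset and let $s_R:\mathcal U''\to\mathcal U/G$ be a semi-local right splitting of the discrete Atiyah sequence in the category of fiber bundles with a section over $Q/G$, i.e. a smooth map with $F_2\circ s_R=\mathrm{id}_{\mathcal U''}$ and $s_R(\pi(q),\pi(q))=[q,q]$ for all $q$. Let $\mathcal A_d:\mathcal U\to G$ be the discrete connection form associated with $s_R$, i.e. the unique smooth $\mathcal A_d$ with $\mathcal A_d(l^Q_{g_0}(q_0),l^Q_{g_1}(q_1))=g_1\mathcal A_d(q_0,q_1)g_0^{-1}$, $\mathcal A_d(q,q)=e$, and $s_R(\pi(q_0),\pi(q_1))=[q_0,l^Q_{\mathcal A_d(q_0,q_1)^{-1}}(q_1)]$ for all $(q_0,q_1)\in\mathcal U$. Then $s_R$ is a morphism of local Lie groupoids from $\mathcal U''$ to $\mathcal U/G$ if and only if $\mathcal A_d$ is flat.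
   Context: $G$ is a Lie group acting freely and properly on the left on $Q$ by $l^Q$; $\pi:Q\to Q/G$ is the quotient; $[q_0,q_1]$ denotes the class in $(Q\times Q)/G$ of the diagonal action, and $F_2([q_0,q_1])=(\pi(q_0),\pi(q_1))$. $\mathcal V_d=\{(q,l^Q_g(q))\}$. An open $\mathcal U\subset Q\times Q$ is of $D$-type if it contains $\mathcal V_d$ and is invariant under $(g_0,g_1)\cdot(q_0,q_1)=(l^Q_{g_0}(q_0),l^Q_{g_1}(q_1))$; symmetric if invariant under $(q_0,q_1)\mapsto(q_1,q_0)$. $\mathcal U''=(\pi\times\pi)(\mathcal U)$. Local Lie groupoid over $M$: manifold $G$, submersions $\alpha,\beta:G\to M$, diffeomorphism $i$ ($g\mapsto g^{-1}$), smooth $\epsilon:M\to G$, smooth $m:G_m\to G$ ($(g_1,g_2)\mapsto g_1g_2$) on an open $G_m\subset G_2=\{(g_1,g_2):\beta(g_1)=\alpha(g_2)\}$, with: $\alpha\epsilon=\beta\epsilon=\mathrm{id}$; $(g_1,g_2)\in G_m\Rightarrow(g_2^{-1},g_1^{-1})\in G_m$ and $(g_1g_2)^{-1}=g_2^{-1}g_1^{-1}$; $(\epsilon\alpha(g),g),(g,\epsilon\beta(g))\in G_m$ and $\epsilon\alpha(g)g=g=g\epsilon\beta(g)$; $(g,g^{-1}),(g^{-1},g)\in G_m$, $gg^{-1}=\epsilon\alpha(g)$, $g^{-1}g=\epsilon\beta(g)$; if $(g_1,g_2),(g_2,g_3),(g_1,g_2g_3)\in G_m$ then $(g_1g_2,g_3)\in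 G_m$ and $(g_1g_2)g_3=g_1(g_2g_3)$. A morphism $F:G\to G'$ of local Lie groupoids is smooth with $F(\epsilon(M))\subset\epsilon'(M')$ and, for $(g_1,g_2)\in G_m$, $(F(g_1),F(g_2))\in G'_m$ and $F(g_1g_2)=F(g_1)F(g_2)$. If $\Gamma$ is a Lie groupoid and $U\subset\Gamma$ open with $U^{-1}\subset U$, $\epsilon(M)\subset U$, then $U$ is a local Lie groupoid with restricted structure maps and $U_m=U_2\cap m^{-1}(U)$. Here $\mathcal U''$ carries this structure as an open subset of the pair groupoid $(Q/G)\times(Q/G)$ (source/target the projections, $(r_0,r_1)(r_1,r_2)=(r_0,r_2)$), and $\mathcal U/G$ as an open subset of the Atiyah groupoid $(Q\times Q)/G$ (source $[q_0,q_1]\mapsto\pi(q_0)$, target $\pi(q_1)$, $[q_0,q_1][q_1,q_2]=[q_0,q_2]$, unit $[q,q]$, inverse $[q_1,q_0]$). Flatness: with $\mathcal U^{(3)}=\{(q_0,q_1,q_2):(q_i,q_j)\in\mathcal U\ \forall i,j\}$, the discrete curvature is $\mathcal B_d(q_0,q_1,q_2)=\mathcal A_d(q_0,q_2)^{-1}\mathcal A_d(q_1,q_2)\mathcal A_d(q_0,q_1)$, and $\mathcal A_d$ is flat if $\mathcal B_d\equiv e$ on $\mathcal U^{(3)}$. *)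

(* Quotients are modelled
   concretely as types of orbits (equivalence classes as subsets). *)
From Stdlib Require Import ClassicalEpsilon FunctionalExtensionality PropExtensionality.
Set Implicit Arguments.

Record Group := {
  gcar :> Type;
  gmul : gcar -> gcar -> gcar;
  ginv : gcar -> gcar;
  gone : gcar;
  gmulA : forall x y z, gmul x (gmul y z) = gmul (gmul x y) z;
  gmul1l : forall x, gmul gone x = x;
  gmul1r : forall x, gmul x gone = x;
  gmulVl : forall x, gmul (ginv x) x = gone;
  gmulVr : forall x, gmul x (ginv x) = gone
}.

Definition is_left_action {G : Group} {Q : Type} (l : G -> Q -> Q) : Prop :=
  (forall q, l (gone G) q = q) /\
  (forall g h q, l (gmul G g h) q = l g (l h q)).

Definition is_free_action {G : Group} {Q : Type} (l : G -> Q -> Q) : Prop :=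
  forall g q, l g q = q -> g = gone G.

Definition orbit {G : Group} {Q : Type} (l : G -> Q -> Q) (q : Q) : Q -> Prop :=
  fun q' => exists g : G, q' = l g q.

Definition quot {G : Group} {Q : Type} (l : G -> Q -> Q) : Type :=
  { S : Q -> Prop | exists q, S = orbit l q }.

Definition proj {G : Group} {Q : Type} (l : G -> Q -> Q) (q : Q) : quot l :=
  exist _ (orbit l q) (ex_intro _ q eq_refl).

Definition dorbit {G : Group} {Q : Type} (l : G -> Q -> Q) (q0 q1 : Q)
  : Q * Q -> Prop :=
  fun p => exists g : G, p = (l g q0, l g q1).

Definition atiyah {G : Group} {Q : Type} (l : G -> Q -> Q) : Type :=
  { S : Q * Q -> Prop | exists q0 q1, S = dorbit l q0 q1 }.

Definition acls {G : Group} {Q : Type} (l : G -> Q -> Q) (q0 q1 : Q) : atiyah l :=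
  exist _ (dorbit l q0 q1) (ex_intro _ q0 (ex_intro _ q1 eq_refl)).

(* F_2([q0,q1]) = (pi q0, pi q1), expressed as a relation on classes
   (F_2 is well defined; here we say a is sent to (r0,r1)). *)
Definition F2_is {G : Group} {Q : Type} (l : G -> Q -> Q) (a : atiyah l)
  (r0 r1 : quot l) : Prop :=
  exists q0 q1, a = acls l q0 q1 /\ r0 = proj l q0 /\ r1 = proj l q1.

(* Multiplication in the Atiyah groupoid: [q0,q1][q1,q2] = [q0,q2].
   atiyah_prod a b c  <->  (a,b) composable (beta a = alpha b) and a b = c. *)
Definition atiyah_prod {G : Group} {Q : Type} (l : G -> Q -> Q)
  (a b c : atiyah l) : Prop :=
  exists q0 q1 q2, a = acls l q0 q1 /\ b = acls l q1 q2 /\ c = acls l q0 q2.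

Definition D_type {G : Group} {Q : Type} (l : G -> Q -> Q) (U : Q -> Q -> Prop) : Prop :=
  (forall q (g : G), U q (l g q)) /\
  (forall (g0 g1 : G) q0 q1, U q0 q1 -> U (l g0 q0) (l g1 q1)).

Definition symmetric_set {Q : Type} (U : Q -> Q -> Prop) : Prop :=
  forall q0 q1, U q0 q1 -> U q1 q0.

Definition Upp {G : Group} {Q : Type} (l : G -> Q -> Q) (U : Q -> Q -> Prop)
  (r0 r1 : quot l) : Prop :=
  exists q0 q1, U q0 q1 /\ r0 = proj l q0 /\ r1 = proj l q1.

Definition UmodG {G : Group} {Q : Type} (l : G -> Q -> Q) (U : Q -> Q -> Prop)
  (a : atiyah l) : Prop :=
  exists q0 q1, U q0 q1 /\ a = acls l q0 q1.

(* In U'': g1 = (r0,r1), g2 = (r1,r2), g1 g2 = (r0,r2). *)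
Definition local_groupoid_morphism {G : Group} {Q : Type} (l : G -> Q -> Q)
  (U : Q -> Q -> Prop) (s : quot l -> quot l -> atiyah l) : Prop :=
  (forall r : quot l, exists q, s r r = acls l q q) /\
  (forall r0 r1 r2 : quot l,
     Upp U r0 r1 -> Upp U r1 r2 -> Upp U r0 r2 ->
     exists c, atiyah_prod (s r0 r1) (s r1 r2) c /\ UmodG U c /\ s r0 r2 = c).

Definition flat {G : Group} {Q : Type} (U : Q -> Q -> Prop) (A : Q -> Q -> G) : Prop :=
  forall q0 q1 q2,
    U q0 q0 -> U q0 q1 -> U q0 q2 -> U q1 q0 -> U q1 q1 -> U q1 q2 ->
    U q2 q0 -> U q2 q1 -> U q2 q2 ->
    gmul G (gmul G (ginv G (A q0 q2)) (A q1 q2)) (A q0 q1) = gone G.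

From Stdlib Require Import FunctionalExtensionality PropExtensionality ProofIrrelevance.
Set Implicit Arguments.
Unset Strict Implicit.

(* Every point of U'' lifts to U, where s_R(pi q0, pi q1) = [q0, A(q0,q1)^-1 q1].
   Multiplying in the Atiyah groupoid after translating the second class by
   A(q0,q1)^-1 gives s_R(r0,r1) s_R(r1,r2) = [q0, A(q0,q1)^-1 A(q1,q2)^-1 q2].
   Since the action is free, [q0, x] determines x and g q determines g, so
   multiplicativity of s_R says A(q0,q2)^-1 = A(q0,q1)^-1 A(q1,q2)^-1, which is
   flatness. *)

Lemma gmul3_eq1 (G : Group) (a b c : G) :
  gmul G (gmul G a b) c = gone G <-> a = gmul G (ginv G c) (ginv G b).
Proof.
  split; intro H.
  - transitivity (gmul G (gmul G (gmul G a b) c) (gmul G (ginv G c) (ginv G b))).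
    + rewrite <- !gmulA, (gmulA G c), gmulVr, gmul1l, gmulVr, gmul1r.
      reflexivity.
    + rewrite H, gmul1l. reflexivity.
  - rewrite H, <- !gmulA, (gmulA G (ginv G b)), gmulVl, gmul1l, gmulVl.
    reflexivity.
Qed.

Section Action.
Variables (G : Group) (Q : Type) (l : G -> Q -> Q).
Hypothesis Hact : is_left_action l.

Lemma act1 q : l (gone G) q = q.
Proof. apply Hact. Qed.

Lemma actM g h q : l (gmul G g h) q = l g (l h q).
Proof. apply Hact. Qed.

Lemma actVK g q : l (ginv G g) (l g q) = q.
Proof. rewrite <- actM, gmulVl, act1. reflexivity. Qed.

Lemma proj_surj (r : quot l) : exists q, r = proj l q.
Proof.
  destruct r as [S [q ->]]. exists q. apply subset_eq_compat. reflexivity.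
Qed.

Lemma proj_eq_orbit a b : proj l a = proj l b -> exists g, b = l g a.
Proof.
  intro E. apply (f_equal (@proj1_sig _ _)) in E.
  assert (Hb : orbit l b b) by (exists (gone G); rewrite act1; reflexivity).
  simpl in E. rewrite <- E in Hb. exact Hb.
Qed.

Lemma acls_eq_orbit a b c d :
  acls l a b = acls l c d -> exists g, c = l g a /\ d = l g b.
Proof.
  intro E. apply (f_equal (@proj1_sig _ _)) in E.
  assert (Hcd : dorbit l c d (c, d))
    by (exists (gone G); rewrite !act1; reflexivity).
  simpl in E. rewrite <- E in Hcd. destruct Hcd as [g Hg].
  injection Hg. eauto.
Qed.

Lemma acls_act g a b : acls l (l g a) (l g b) = acls l a b.
Proof.
  apply subset_eq_compat. extensionality p.
  apply propositional_extensionality. split; intros [h ->].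
  - exists (gmul G h g). rewrite !actM. reflexivity.
  - exists (gmul G h (ginv G g)). rewrite !actM, !actVK. reflexivity.
Qed.

Lemma atiyah_prod_acls q0 q1 q2 :
  atiyah_prod (acls l q0 q1) (acls l q1 q2) (acls l q0 q2).
Proof. exists q0, q1, q2. auto. Qed.

Hypothesis Hfree : is_free_action l.

Lemma act_inj a b q : l a q = l b q -> a = b.
Proof.
  intro E.
  assert (Hfix : l (gmul G (ginv G b) a) q = q)
    by (rewrite actM, E, actVK; reflexivity).
  apply Hfree in Hfix.
  rewrite <- (gmul1r G b), <- Hfix, gmulA, gmulVr, gmul1l. reflexivity.
Qed.

Lemma acls_inj_r q x y : acls l q x = acls l q y -> x = y.
Proof.
  intro E. destruct (acls_eq_orbit E) as [g [Hg ->]].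
  symmetry in Hg. rewrite <- (act1 q) in Hg at 2.
  apply act_inj in Hg. rewrite Hg, act1. reflexivity.
Qed.

Lemma atiyah_prod_aclsE q0 q1 q2 c :
  atiyah_prod (acls l q0 q1) (acls l q1 q2) c <-> c = acls l q0 q2.
Proof.
  split; [| intros ->; apply atiyah_prod_acls].
  intros (p0 & p1 & p2 & E01 & E12 & ->).
  destruct (acls_eq_orbit E01) as [g [-> Hg]].
  destruct (acls_eq_orbit E12) as [h [Hh ->]].
  assert (gh : g = h) by (apply (@act_inj _ _ q1); congruence).
  subst h. apply acls_act.
Qed.

End Action.

Section DType.
Variables (G : Group) (Q : Type) (l : G -> Q -> Q) (U : Q -> Q -> Prop).
Hypotheses (Hact : is_left_action l) (HD : D_type l U).

Lemma D_type_refl q : U q q.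
Proof. rewrite <- (act1 Hact q) at 2. apply HD. Qed.

Lemma Upp_proj a b : Upp U (proj l a) (proj l b) <-> U a b.
Proof.
  split; [| intro Hab; exists a, b; auto].
  intros (x & y & Hxy & Ha & Hb).
  destruct (proj_eq_orbit Hact Ha) as [g ->].
  destruct (proj_eq_orbit Hact Hb) as [h ->].
  rewrite <- (actVK Hact g a), <- (actVK Hact h b). apply HD. exact Hxy.
Qed.

End DType.

Section Splitting.
Variables (G : Group) (Q : Type) (l : G -> Q -> Q) (U : Q -> Q -> Prop).
Hypotheses (Hact : is_left_action l) (Hfree : is_free_action l).
Variables (sR : quot l -> quot l -> atiyah l) (Ad : Q -> Q -> G).
Hypothesis HsR_into : forall r0 r1, Upp U r0 r1 -> UmodG U (sR r0 r1).
Hypothesis HAd_sR : forall q0 q1, U q0 q1 ->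
  sR (proj l q0) (proj l q1) = acls l q0 (l (ginv G (Ad q0 q1)) q1).

Lemma sR_atiyah_prodE q0 q1 q2 c : U q0 q1 -> U q1 q2 ->
  atiyah_prod (sR (proj l q0) (proj l q1)) (sR (proj l q1) (proj l q2)) c <->
  c = acls l q0 (l (gmul G (ginv G (Ad q0 q1)) (ginv G (Ad q1 q2))) q2).
Proof.
  intros U01 U12.
  rewrite (HAd_sR U01), (HAd_sR U12),
    <- (acls_act Hact (ginv G (Ad q0 q1)) q1), <- actM by exact Hact.
  apply atiyah_prod_aclsE; assumption.
Qed.

Lemma sR_multiplicativeE q0 q1 q2 : U q0 q1 -> U q1 q2 -> U q0 q2 ->
  (exists c, atiyah_prod (sR (proj l q0) (proj l q1)) (sR (proj l q1) (proj l q2)) c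
     /\ UmodG U c /\ sR (proj l q0) (proj l q2) = c) <->
  ginv G (Ad q0 q2) = gmul G (ginv G (Ad q0 q1)) (ginv G (Ad q1 q2)).
Proof.
  intros U01 U12 U02. split.
  - intros (c & Hprod & _ & E).
    rewrite (sR_atiyah_prodE _ U01 U12), <- E, (HAd_sR U02) in Hprod.
    exact (act_inj Hact Hfree (acls_inj_r Hact Hfree Hprod)).
  - intro E. exists (sR (proj l q0) (proj l q2)). repeat split.
    + rewrite (sR_atiyah_prodE _ U01 U12), (HAd_sR U02), E. reflexivity.
    + apply HsR_into. exists q0, q2. auto.
Qed.

End Splitting.

Theorem proposition5p20 (G : Group) (Q : Type) (l : G -> Q -> Q)
  (Hact : is_left_action l) (Hfree : is_free_action l)
  (U : Q -> Q -> Prop) (HD : D_type l U) (Hsym : symmetric_set U)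
  (sR : quot l -> quot l -> atiyah l)
  (HsR_F2 : forall r0 r1, Upp U r0 r1 -> F2_is (sR r0 r1) r0 r1)
  (HsR_into : forall r0 r1, Upp U r0 r1 -> UmodG U (sR r0 r1))
  (HsR_unit : forall q, sR (proj l q) (proj l q) = acls l q q)
  (Ad : Q -> Q -> G)
  (HAd_eq : forall (g0 g1 : G) q0 q1, U q0 q1 ->
     Ad (l g0 q0) (l g1 q1) = gmul G (gmul G g1 (Ad q0 q1)) (ginv G g0))
  (HAd_diag : forall q, Ad q q = gone G)
  (HAd_sR : forall q0 q1, U q0 q1 ->
     sR (proj l q0) (proj l q1) = acls l q0 (l (ginv G (Ad q0 q1)) q1)) :
  local_groupoid_morphism U sR <-> flat U Ad.
Proof.
  split.
  - intros [_ Hmul] q0 q1 q2 _ U01 U02 _ _ U12 _ _ _.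
    apply gmul3_eq1, (sR_multiplicativeE Hact Hfree HsR_into HAd_sR); auto.
    apply Hmul; apply Upp_proj; assumption.
  - intro Hflat. split.
    + intro r. destruct (proj_surj r) as [q ->]. exists q. apply HsR_unit.
    + intros r0 r1 r2 H01 H12 H02.
      destruct (proj_surj r0) as [q0 ->].
      destruct (proj_surj r1) as [q1 ->].
      destruct (proj_surj r2) as [q2 ->].
      rewrite !(Upp_proj Hact HD) in *.
      apply (sR_multiplicativeE Hact Hfree HsR_into HAd_sR); auto.
      apply gmul3_eq1, Hflat; auto using (D_type_refl Hact HD).
Qed.
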